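(* Let $F\colon X\hookrightarrow Y$ be an injective linear map of finite-dimensional vector spaces over a non-Archimedean local field $\mathbb{F}$; identify $X$ with its image in $Y$ and let $c=\dim Y-\dim X$. Let $\xi\in C(Gr_k^X,\mathcal{L}_k^X)\otimes D(X)^*$ and $E\in Gr_{k+c}^Y$. If $Y\ne E+X$ then $(F_*\xi)(E)=0$.
   Context: For a finite-dimensional space $W$, $D(W)$ is the one-dimensional space of $\mathbb{C}$-valued Lebesgue measures on $W$, with canonical isomorphisms $D(W)\cong D(K)\otimes D(W/K)$ for subspaces $K$, and $D(W)^*\cong D(W^\vee)$ (the dual of a non-vanishing $\mu$ goes to $\mu^{-1}$, defined by $\mu^{-1}(\Lambda^\vee)=1/\mu(\Lambda)$ for all lattices $\Lambda\subset W$, $\Lambda^\vee=\{f:f(\Lambda)\subset\mathcal{O}\}$). For linear $T\colon A\to B$ with $\dim A=\dim B$ and $\mu\in D(B)$, $T^*\mu$ is the measure $S\mapsto\mu(T(S))$ ($0$ if $T$ is not invertible). $Gr_k^V$ is the Grassmannian, $\mathcal{L}_k^V$ the line bundle with fiber $D(E)$ over $E$, and $C(Gr_k^V,\mathcal{L}_k^V)$ its Banach space of continuous sections. Pull-back of sections: for linear $G\colon A\to B$, $(G^*f)(E)=(G|_E)^*(f(G(E)))$ if $\dim G(E)=\dim E$, else $0$. Fourier transform: for $E\subset V$ ($\dim V=n$) with annihilator $E^\perp\subset V^\vee$, let $a_E\colon D(E)\to D(E^\perp)\otimes D(V^\vee)^*$ be the composite $D(E)\cong D(E^\vee)^*=D(V^\vee/E^\perp)^*\cong(D(V^\vee)\otimes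 D(E^\perp)^* )^*\cong D(E^\perp)\otimes D(V^\vee)^*$, and $\mathcal{F}_V\colon C(Gr_i^V,\mathcal{L}_i^V)\to C(Gr_{n-i}^{V^\vee},\mathcal{L}_{n-i}^{V^\vee})\otimes D(V^\vee)^*$, $(\mathcal{F}_V\phi)(E^\perp)=a_E(\phi(E))$; it is an isomorphism. Push-forward: for linear $F\colon X\to Y$ with dual $F^\vee\colon Y^\vee\to X^\vee$, $F_*:=\mathcal{F}_{Y^\vee}\circ(F^\vee)^*\circ\mathcal{F}_{X^\vee}^{-1}\colon C(Gr_k^X,\mathcal{L}_k^X)\otimes D(X)^*\to C(Gr_{k-\dim X+\dim Y}^Y,\mathcal{L}^Y_{k-\dim X+\dim Y})\otimes D(Y)^*$ (using $X^{\vee\vee}=X$, $D(X^\vee)^*=D(X)$ etc.). *)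

From HB Require Import structures.
From mathcomp Require Import all_boot all_order all_algebra.
From mathcomp Require Import complex.
From mathcomp Require Import boolp classical_sets reals.
From Stdlib Require Import ClassicalEpsilon.

Set Implicit Arguments.
Unset Strict Implicit.
Unset Printing Implicit Defensive.

Import Order.TTheory GRing.Theory Num.Theory.
Local Open Scope ring_scope.
Local Open Scope classical_set_scope.

Section LocalField.
Variables (R : realType) (K : fieldType) (abs : K -> R).

(* A non-Archimedean local field: a field complete for a non-trivial discrete
   non-Archimedean absolute value, with finite residue field. *)
Definition nonarch_local_field : Prop :=
  (forall x, abs x = 0 <-> x = 0) /\
  [/\ (forall x y, abs (x * y) = abs x * abs y),
      (forall x y, abs (x + y) <= Num.max (abs x) (abs y)),
      (exists p : K, (0 < abs p < 1) /\
         forall x, x != 0 -> exists z : int, abs x = abs p ^ z),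
      (exists s : seq K, (forall y, y \in s -> abs y <= 1) /\
         forall x, abs x <= 1 -> exists y, y \in s /\ abs (x - y) < 1) &
      (forall u : nat -> K,
         (forall e : R, 0 < e -> exists N, forall m n, (N <= m)%N -> (N <= n)%N ->
                abs (u m - u n) < e) ->
         exists l, forall e : R, 0 < e -> exists N, forall n, (N <= n)%N ->
                abs (u n - l) < e)].
End LocalField.

Section Measures.
Variables (R : realType) (K : fieldType) (abs : K -> R).
Local Notation C := R[i].

(* Lattices (compact open O-submodules spanning S, O = {|x| <= 1}) in a
   subspace S of an ambient finite-dimensional space W, as subsets of W:
   the O-span of a K-basis of S. *)
Definition lattice (W : vectType K) (S : {vspace W}) (L : set W) : Prop :=
  exists b : seq W, basis_of S b /\
    L = [set v | exists a : 'I_(size b) -> K,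
                   (forall i, abs (a i) <= 1) /\ v = \sum_i a i *: b`_i].

Definition lindex (W : vectType K) (L L' : set W) (n : nat) : Prop :=
  exists s : seq W, [/\ size s = n,
    (forall i, (i < n)%N -> L s`_i),
    (forall i j, (i < n)%N -> (j < n)%N -> L' (s`_i - s`_j) -> i = j) &
    (forall x, L x -> exists2 i, (i < n)%N & L' (x - s`_i))].

(* D(S): C-valued Lebesgue (Haar) measures on the subspace S, recorded by their
   values on lattices (normalised to 0 on non-lattice subsets). *)
Definition meas (W : vectType K) (S : {vspace W}) (mu : set W -> C) : Prop :=
  (forall L, ~ lattice S L -> mu L = 0) /\
  (forall L L' n, lattice S L -> lattice S L' -> L' `<=` L -> lindex L L' n ->
      mu L = n%:R * mu L').

Definition mzero (W : Type) : set W -> C := fun _ => 0.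
Arguments mzero W : clear implicits.

Definition dual (V : vectType K) := 'Hom(V, K^o).

Definition annV (V : vectType K) (U : {vspace V}) : {vspace dual V} :=
  lker (linfun (fun f : dual V => (f \o projv U)%VF)).

Definition annD (V : vectType K) (E : {vspace dual V}) : {vspace V} :=
  (\bigcap_(i < \dim E) lker (vbasis E)`_i)%VS.

Definition subdual (V : vectType K) (E : {vspace dual V}) := 'Hom(subvs_of E, K^o).

(* the surjection V -> E^dual, with kernel annD E (identifies V/E^perp = E^dual) *)
Definition resE (V : vectType K) (E : {vspace dual V}) (v : V) : subdual E :=
  linfun (fun e : subvs_of E => (vsval e : dual V) v).
Arguments resE {V} E v.

Definition dualL (V : vectType K) (E : {vspace dual V}) (L : set (dual V))
  : set (subdual E) :=
  [set f | forall e, L e -> abs (f (vsproj E e)) <= 1].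
Arguments dualL {V} E L.

Definition cscale (W : Type) (c : C) (m : set W -> C) : set W -> C :=
  fun S => c * m S.

Definition choose_fun (A B : Type) (b : B) (P : (A -> B) -> Prop) : A -> B :=
  epsilon (inhabits (fun _ => b)) P.

(* a_E : D(E) -> D(E^perp) (x) D(V)^*  (the latter realised as linear maps
   D(V) -> D(E^perp)), for E <= V^dual and E^perp <= V^dual^dual = V.
   It is the composite
     D(E) = D(E^dual)^* = D(V/E^perp)^* = (D(V) (x) D(E^perp)^* )^*
          = D(E^perp) (x) D(V)^*,
   where D(E) = D(E^dual)^* sends mu to tau |-> mu(L) tau(L^dual) (any lattice
   L of E; this is the iso sending nu^{-1} to the dual vector of nu), and
   D(V) = D(E^perp) (x) D(V/E^perp) sends sigma (x) tau to
   Lam |-> sigma(Lam /\ E^perp) tau(image of Lam).  Unwinding, a_E(mu)(rho) is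
   the unique element sigma' of D(E^perp) such that
   sigma' = (mu(L) tau(L^dual)) sigma  whenever rho = sigma (x) tau, sigma <> 0. *)
Definition aE (V : vectType K) (E : {vspace dual V}) (mu : set (dual V) -> C)
  (rho : set V -> C) : set V -> C :=
  choose_fun 0 (fun s : set V -> C =>
    meas (annD E) s /\
    forall (sigma : set V -> C) (tau : set (subdual E) -> C) (L : set (dual V)),
      meas (annD E) sigma -> sigma <> mzero V ->
      meas (fullv : {vspace subdual E}) tau -> lattice E L ->
      (forall Lam, lattice (fullv : {vspace V}) Lam ->
         rho Lam = sigma (Lam `&` [set v | v \in annD E]) * tau (resE E @` Lam)) ->
      s = cscale (mu L * tau (dualL E L)) sigma).

(* sections of L_k^V over Gr_k^V (values off Gr_k are normalised to 0) *)
Definition section (V : vectType K) (k : nat) (f : {vspace V} -> set V -> C) : Prop :=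
  forall U, if \dim U == k then meas U (f U) else f U = mzero V.

(* sections of L_k^V (x) D(V)^*, the fibre D(U) (x) D(V)^* realised as
   C-linear maps D(V) -> D(U) *)
Definition tsection (V : vectType K) (k : nat)
  (g : {vspace V} -> (set V -> C) -> set V -> C) : Prop :=
  forall U, if \dim U == k then
     (forall rho, meas (fullv : {vspace V}) rho -> meas U (g U rho)) /\
     (forall (c : C) rho1 rho2, meas (fullv : {vspace V}) rho1 ->
        meas (fullv : {vspace V}) rho2 ->
        g U (fun S => c * rho1 S + rho2 S) = (fun S => c * g U rho1 S + g U rho2 S))
  else forall rho, meas (fullv : {vspace V}) rho -> g U rho = mzero V.

(* Fourier transform F_{V^dual}: sections over Gr_i(V^dual) ->
   sections over Gr_{n-i}(V) (x) D(V)^*  (using V^dual^dual = V):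
   (F phi)(E^perp) = a_E(phi(E)). *)
Definition fourier (V : vectType K) (i : nat)
  (phi : {vspace dual V} -> set (dual V) -> C) :
  {vspace V} -> (set V -> C) -> set V -> C :=
  fun U rho => if \dim U == (\dim (fullv : {vspace V}) - i)%N
               then aE (annV U) (phi (annV U)) rho else mzero V.

Definition fourier_inv (V : vectType K) (i : nat)
  (xi : {vspace V} -> (set V -> C) -> set V -> C) :
  {vspace dual V} -> set (dual V) -> C :=
  fun E => if \dim E == i then
    choose_fun 0 (fun mu : set (dual V) -> C => meas E mu /\
       forall rho, meas (fullv : {vspace V}) rho -> aE E mu rho = xi (annD E) rho)
  else mzero (dual V).

Definition pullback (A B : vectType K) (G : 'Hom(A, B))
  (f : {vspace B} -> set B -> C) : {vspace A} -> set A -> C :=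
  fun E => if \dim (G @: E)%VS == \dim E
           then (fun S => f (G @: E)%VS ((fun a => G a) @` S))
           else mzero A.

Definition dualmap (X Y : vectType K) (F : 'Hom(X, Y)) : 'Hom(dual Y, dual X) :=
  linfun (fun g : dual Y => (g \o F)%VF).

(* push-forward F_* = F_{Y^dual} o (F^dual)^* o F_{X^dual}^{-1} on
   sections of L_k^X (x) D(X)^*, landing in sections of
   L_{k - dim X + dim Y}^Y (x) D(Y)^* *)
Definition pushforward (X Y : vectType K) (F : 'Hom(X, Y)) (k : nat)
  (xi : {vspace X} -> (set X -> C) -> set X -> C) :
  {vspace Y} -> (set Y -> C) -> set Y -> C :=
  let i := (\dim (fullv : {vspace X}) - k)%N in
  fourier i (pullback (dualmap F) (fourier_inv i xi)).

End Measures.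
Arguments mzero {R} W.

From HB Require Import structures.
From mathcomp Require Import all_boot all_order all_algebra.
From mathcomp Require Import complex.
From mathcomp Require Import boolp classical_sets reals.
From mathcomp Require Import ring.
From Stdlib Require Import ClassicalEpsilon.

(* Let E^perp <= Y^dual be the annihilator of E.  A nonzero functional vanishing on E + X
   lies both in E^perp and in the kernel of F^dual, so F^dual is not injective on E^perp and
   the pulled-back section vanishes there: (F_* xi)(E) is a_E applied to the zero measure.
   That a_E(0) = 0 is the real content.  a_E(0) is pinned down by the factorisations
   rho(Lam) = sigma(Lam /\ E) tau(image of Lam) of a Haar measure rho on Y along
   0 -> E -> Y -> Y/E, and such a factorisation exists for every nonzero Haar measure sigma
   on E, in particular for a_E(0) itself were it nonzero.  To build tau, one shows that every
   lattice of Y has a basis adapted to E (Gaussian elimination over O, pivoting on entries of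
   maximal absolute value), that indices of lattices in the same space are finite and
   multiply along the exact sequence, and then sets tau(T) = rho(Lam) / sigma(Lam /\ E) for
   any lattice Lam above T. *)

Set Implicit Arguments.
Unset Strict Implicit.
Unset Printing Implicit Defensive.

Import Order.TTheory GRing.Theory Num.Theory.
Local Open Scope ring_scope.
Local Open Scope classical_set_scope.

Lemma linfunE_lin (K : fieldType) (aT rT : vectType K) (f : aT -> rT) :
  linear f -> linfun f =1 f.
Proof.
move=> lf v.
pose ff : {linear aT -> rT} := HB.pack f (GRing.isLinear.Build _ _ _ _ f lf).
exact: (lfunE ff v).
Qed.

Lemma size_basis_of (K : fieldType) (W : vectType K) (U : {vspace W}) X :
  basis_of U X -> size X = \dim U.
Proof. by move=> hb; rewrite -(span_basis hb); move: (basis_free hb) => /eqnP ->. Qed.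

Lemma map_lift (A B : eqType) (P : A -> Prop) (f : A -> B) (s : seq B) :
  (forall t, t \in s -> exists2 w, P w & f w = t) ->
  exists2 ws, map f ws = s & forall w, w \in ws -> P w.
Proof.
elim: s => [|t s IH] h; first by exists [::].
have [ws <- Pws] : exists2 ws, map f ws = s & forall w, w \in ws -> P w.
  by apply: IH => t' ht'; apply: h; rewrite inE ht' orbT.
have [w Pw <-] := h t (mem_head _ _).
by exists (w :: ws) => // w'; rewrite inE => /orP[/eqP ->|/Pws].
Qed.

Lemma map_uniq_inj_in (A B : eqType) (f : A -> B) (s : seq A) :
  uniq (map f s) -> {in s &, injective f}.
Proof.
elim: s => [|x s IH] //= /andP [hx hu] y z.
rewrite !inE => /orP [/eqP ->|hy] /orP [/eqP ->|hz] // hf.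
- by move: hx; rewrite hf map_f.
- by move: hx; rewrite -hf map_f.
- exact: IH.
Qed.

Lemma exists_seq_argmax (T : eqType) d (O : orderType d) (f : T -> O) (s : seq T) :
  s != [::] -> exists2 h, h \in s & forall x, x \in s -> (f x <= f h)%O.
Proof.
elim: s => [|y s IH] // _.
have [->|sn] := eqVneq s [::].
  by exists y; rewrite ?mem_head // => x; rewrite inE => /eqP ->.
have [h hs hm] := IH sn.
have [le|lt] := leP (f h) (f y).
  exists y; first exact: mem_head.
  by move=> x; rewrite inE => /orP [/eqP ->//|/hm hx]; apply: le_trans le.
exists h; first by rewrite inE hs orbT.
by move=> x; rewrite inE => /orP [/eqP ->|/hm //]; apply: ltW.
Qed.

Lemma lfun_span_eq0 (K : fieldType) (V : vectType K) (g : 'Hom(V, K^o)) (b : seq V) v :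
  (forall x, x \in b -> g x = 0) -> v \in <<b>>%VS -> g v = 0.
Proof.
move=> hb hv; have : (<<b>> <= lker g)%VS by apply/span_subvP => x /hb h; rewrite memv_ker h.
by move/subvP/(_ v hv); rewrite memv_ker => /eqP.
Qed.

(** * Indices of subgroups *)

Section Index.
Variables (K : fieldType) (V : vectType K).

Definition zmod_set (L : set V) := L 0 /\ forall x y, L x -> L y -> L (x - y).

Lemma zmod_setN L x : zmod_set L -> L x -> L (- x).
Proof. by move=> [L0 LB] Lx; rewrite -sub0r; apply: LB. Qed.

Lemma zmod_setD L x y : zmod_set L -> L x -> L y -> L (x + y).
Proof. by move=> hL Lx Ly; rewrite -[y]opprK; apply: hL.2 => //; apply: zmod_setN. Qed.

Definition covers (L L' : set V) (s : seq V) :=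
  (forall x, x \in s -> L x) /\ (forall x, L x -> exists2 y, y \in s & L' (x - y)).

Lemma covers_sub L L' L'' s : L' `<=` L'' -> covers L L' s -> covers L L'' s.
Proof. by move=> h [h1 h2]; split => // x /h2 [y hy /h]; exists y. Qed.

Lemma covers_trans A B C s t : B `<=` A -> (forall x y, A x -> A y -> A (x + y)) ->
  covers A B s -> covers B C t -> covers A C [seq y + z | y <- s, z <- t].
Proof.
move=> BA hA [s1 s2] [t1 t2]; split.
  by move=> x /allpairsP [[y z] /= [hy hz ->]]; apply: hA; [apply: s1 | apply/BA/t1].
move=> x /s2 [y hy /t2 [z hz hC]]; exists (y + z); first by apply/allpairsP; exists (y, z).
by rewrite opprD addrA.
Qed.

Lemma lindexP (L L' : set V) n : L' 0 ->
  lindex L L' n <-> exists s, [/\ size s = n, uniq s, (forall x, x \in s -> L x),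
     (forall x y, x \in s -> y \in s -> L' (x - y) -> x = y) &
     (forall x, L x -> exists2 y, y \in s & L' (x - y))].
Proof.
move=> h0; split.
  move=> [s [hs h1 h2 h3]]; exists s; split => //.
  - apply/(uniqP 0) => i j; rewrite !inE => hi hj he.
    by apply: h2; rewrite -?hs // he subrr.
  - by move=> x /(nthP 0) [i hi <-]; apply: h1; rewrite -hs.
  - by move=> x y /(nthP 0) [i hi <-] /(nthP 0) [j hj <-] /h2 -> //; rewrite -hs.
  - by move=> x /h3 [i hi hx]; exists s`_i => //; apply: mem_nth; rewrite hs.
move=> [s [hs hu h1 h2 h3]]; exists s; split => //.
- by move=> i hi; apply: h1; apply: mem_nth; rewrite hs.
- move=> i j hi hj /h2 he; apply/eqP; rewrite -(nth_uniq 0 _ _ hu) ?hs //.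
  by rewrite he ?mem_nth ?hs.
- move=> x /h3 [y hy hx]; exists (index y s); first by rewrite -hs index_mem.
  by rewrite nth_index.
Qed.

Lemma incongruent_subseq L' (s : seq V) : zmod_set L' ->
  exists t, [/\ uniq t, {subset t <= s},
    (forall x y, x \in t -> y \in t -> L' (x - y) -> x = y) &
    (forall y, y \in s -> exists2 z, z \in t & L' (y - z))].
Proof.
move=> hL'; elim: s => [|x s [t [tu ts tpw tc]]]; first by exists [::].
have [[z zt hz]|nz] := pselect (exists2 z, z \in t & L' (x - z)).
  exists t; split => [//|y /ts|//|y]; first by rewrite inE => ->; rewrite orbT.
  by rewrite inE => /orP [/eqP ->|/tc //]; exists z.
exists (x :: t); split.
- rewrite /= tu andbT; apply/negP => xt.
  by case: nz; exists x; rewrite // subrr; case: hL'.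
- by move=> y; rewrite !inE => /orP [->|/ts ->] //; rewrite orbT.
- move=> y y'; rewrite !inE => /orP[/eqP->|yt] /orP[/eqP->|y't] // hyy.
  + by case: nz; exists y'.
  + by case: nz; exists y; rewrite // -opprB; apply: zmod_setN.
  + exact: tpw.
- move=> y; rewrite inE => /orP [/eqP ->|/tc [z zt hz]].
    by exists x; rewrite ?mem_head // subrr; case: hL'.
  by exists z => //; rewrite inE zt orbT.
Qed.

Lemma covers_lindex L L' s : zmod_set L' -> covers L L' s -> exists n, lindex L L' n.
Proof.
move=> hL' [sL s_cover]; have [t [tu ts tpw tc]] := incongruent_subseq s hL'.
exists (size t); apply/(lindexP _ _ hL'.1).
exists t; split => // [x /ts/sL //|x /s_cover [y ys hy]].
have [z zt hz] := tc y ys; exists z => //.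
by have := zmod_setD hL' hy hz; rewrite addrA subrK.
Qed.

Lemma lindex_gt0 (L L' : set V) n : L 0 -> lindex L L' n -> (0 < n)%N.
Proof. by move=> h0 [s [_ _ _ /(_ 0 h0) [i hi _]]]; apply: leq_ltn_trans hi. Qed.

End Index.

Section ExactIndex.
Variables (K : fieldType) (V W : vectType K) (pi : {additive V -> W}) (Z L L' : set V).
Hypothesis piZ : forall v, pi v = 0 <-> Z v.
Hypotheses (hL : zmod_set L) (hL' : zmod_set L') (L'L : L' `<=` L).

(* If r_i represent (L /\ Z)/(L' /\ Z) and the w_j in L lift representatives of
   pi L / pi L', then the r_i + w_j represent L / L'. *)
Lemma lindex_exact a b : lindex (L `&` Z) (L' `&` Z) a ->
  lindex (pi @` L) (pi @` L') b -> lindex L L' (a * b).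
Proof.
have Z0 : Z 0 by apply/piZ/raddf0.
have ZB x y : Z x -> Z y -> Z (x - y).
  by move=> /piZ hx /piZ hy; apply/piZ; rewrite raddfB hx hy subrr.
have piL'0 : (pi @` L') 0 by exists 0; [case: hL' | apply: raddf0].
move=> /(lindexP _ _ (conj hL'.1 Z0)) [rs [rs_size rs_uniq rsLZ rs_incong rs_cover]].
move=> /(lindexP _ _ piL'0) [ts [ts_size ts_uniq tsL ts_incong ts_cover]].
have [ws ws_ts wsL] : exists2 ws, map pi ws = ts & forall w, w \in ws -> L w.
  by apply: map_lift => t /tsL [w Lw <-]; exists w.
have ws_inj : {in ws &, injective pi} by apply: map_uniq_inj_in; rewrite ws_ts.
have pi_rw r w : r \in rs -> pi (r + w) = pi w by move=> /rsLZ [_ /piZ r0]; rewrite raddfD r0 add0r.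
apply/(lindexP _ _ hL'.1); exists [seq r + w | r <- rs, w <- ws]; split.
- by rewrite size_allpairs rs_size -ts_size -ws_ts size_map.
- apply: allpairs_uniq => //; first by apply: (map_uniq (f := pi)); rewrite ws_ts.
  move=> ? ? /allpairsP [[r1 w1] /= [hr1 hw1 ->]] /allpairsP [[r2 w2] /= [hr2 hw2 ->]] /= e.
  have ew : w1 = w2 by apply: ws_inj => //; rewrite -(pi_rw r1 w1 hr1) e pi_rw.
  by rewrite ew in e *; rewrite (addIr _ e).
- move=> z /allpairsP [[r w] /= [hr hw ->]].
  by apply: zmod_setD hL _ (wsL _ hw); case: (rsLZ _ hr).
- move=> z z' /allpairsP [[r1 w1] /= [hr1 hw1 ->]] /allpairsP [[r2 w2] /= [hr2 hw2 ->]] hz.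
  have ew : w1 = w2.
    apply: ws_inj => //; apply: ts_incong; rewrite -?ws_ts ?map_f //.
    by exists (r1 + w1 - (r2 + w2)); rewrite // raddfB !pi_rw.
  rewrite ew (rs_incong r1 r2) //; split; first by rewrite ew opprD addrACA subrr addr0 in hz.
  by apply: ZB; [case: (rsLZ _ hr1) | case: (rsLZ _ hr2)].
- move=> x Lx.
  have [t ht [l' L'l' hl't]] := ts_cover _ (ex_intro2 _ _ x Lx erefl).
  move: ht; rewrite -ws_ts => /mapP [w hw ht].
  have [r hr [hyr1 hyr2]] : exists2 r, r \in rs & (L' `&` Z) (x - w - l' - r).
    apply: rs_cover; split; first by apply: hL.2; [apply: hL.2 => //; apply: wsL | apply: L'L].
    by apply/piZ; rewrite !raddfB hl't ht subrr.
  exists (r + w); first by apply/allpairsP; exists (r, w).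
  have -> : x - (r + w) = (x - w - l' - r) + l' by rewrite addrAC subrK opprD addrAC addrA.
  exact: zmod_setD.
Qed.

End ExactIndex.

(** * The restriction map V -> E^dual *)

Lemma exists_annihilator (K : fieldType) (W : vectType K) (U : {vspace W}) :
  U != fullv -> exists2 g : 'Hom(W, K^o), g != 0 & forall u, u \in U -> g u = 0.
Proof.
move=> hU.
have [w wU] : exists w, w \notin U.
  apply: contrapT => nw; move/negP: hU; apply; rewrite eqEsubv subvf /=.
  by apply/subvP => x _; apply: contrapT => /negP xU; apply: nw; exists x.
pose u := w - projv U w.
have u0 : u != 0 by apply: contra wU; rewrite subr_eq0 => /eqP ->; apply: memv_proj.
have [i hi] : exists i, coord (vbasis fullv) i u != 0.
  apply: contrapT => nz; move/negP: u0; apply; apply/eqP.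
  rewrite (coord_vbasis (memvf u)) big1 // => i _.
  have /eqP -> : coord (vbasis fullv) i u == 0.
    by apply: contrapT => /negP ?; apply: nz; exists i.
  by rewrite scale0r.
pose f y : K^o := coord (vbasis fullv) i (y - projv U y).
have lf : linear f.
  by move=> a x y; rewrite /f [projv U _]linearP /= opprD addrACA -scalerBr linearP.
exists (linfun f).
  by apply: contraNneq hi => f0; have := linfunE_lin lf w; rewrite f0 zero_lfunE => ->.
by move=> x hx; rewrite (linfunE_lin lf) /f projv_id // subrr linear0.
Qed.

Section Restriction.
Variables (K : fieldType) (V : vectType K) (Ed : {vspace dual V}).
Local Notation Q := (subdual Ed).

Lemma resE_apply v e : resE Ed v e = (vsval e : dual V) v.
Proof. by rewrite /resE linfunE_lin // => a x y; rewrite linearP /= add_lfunE scale_lfunE. Qed.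

Lemma resE_is_linear : linear (resE Ed).
Proof. by move=> a x y; apply/lfunP => e; rewrite add_lfunE scale_lfunE !resE_apply linearP. Qed.

HB.instance Definition _ := GRing.isLinear.Build K V Q _ (resE Ed) resE_is_linear.

Lemma mem_annD v : v \in annD Ed <-> forall f, f \in (vbasis Ed : seq _) -> f v = 0.
Proof.
rewrite /annD memvE; split.
  move/subv_bigcapP => h f /(nthP 0) [i hi <-]; move: hi; rewrite size_tuple => hi.
  by have := h (Ordinal hi) isT; rewrite -memvE memv_ker => /eqP.
move=> h; apply/subv_bigcapP => i _; rewrite -memvE memv_ker.
by apply/eqP/h/mem_nth; rewrite size_tuple.
Qed.

Lemma annD_resE v : (v \in annD Ed) = (resE Ed v == 0).
Proof.
apply/idP/eqP => [/mem_annD hv | hv].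
  apply/lfunP => e; rewrite resE_apply zero_lfunE.
  rewrite (coord_vbasis (subvsP e)) sum_lfunE big1 // => i _.
  by rewrite scale_lfunE hv ?scaler0 // mem_nth ?size_tuple.
apply/mem_annD => f hf.
by rewrite -(vsprojK (vbasis_mem hf)) -resE_apply hv zero_lfunE.
Qed.

Lemma lker_resE : lker (linfun (resE Ed)) = annD Ed.
Proof. by apply/vspaceP => v; rewrite memv_ker lfunE annD_resE. Qed.

Definition subdual_coord (i : 'I_(\dim Ed)) : Q :=
  linfun (fun x : subvs_of Ed => (coord (vbasis Ed) i (vsval x) : K^o)).

Lemma subdual_expand (q : Q) :
  q = \sum_(i < \dim Ed) q (vsproj Ed (vbasis Ed)`_i) *: subdual_coord i.
Proof.
apply/lfunP => x; rewrite sum_lfunE -{1}[x]vsvalK (coord_vbasis (subvsP x)) !linear_sum.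
apply: eq_bigr => i _; rewrite scale_lfunE /subdual_coord linfunE_lin; last first.
  by move=> a y z; rewrite !linearP.
by rewrite !linearZ /=; exact: mulrC.
Qed.

Lemma limg_resE : limg (linfun (resE Ed)) = fullv.
Proof.
case: (eqVneq (limg (linfun (resE Ed))) fullv) => // /exists_annihilator [lam lam0 hlam].
have lam_resE v : lam (resE Ed v) = 0 by apply: hlam; rewrite -lfunE memv_img ?memvf.
have hf (i : 'I_(\dim Ed)) : (vbasis Ed)`_i \in Ed by apply/vbasis_mem/mem_nth; rewrite size_tuple.
have lam_basis : \sum_(i < \dim Ed) lam (subdual_coord i) *: (vbasis Ed)`_i = 0.
  apply/lfunP => v; rewrite sum_lfunE zero_lfunE -[RHS](lam_resE v).
  rewrite [in RHS](subdual_expand (resE Ed v)) linear_sum.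
  by apply: eq_bigr => i _; rewrite scale_lfunE linearZ /= resE_apply vsprojK //; exact: mulrC.
have lam0_coord i : lam (subdual_coord i) = 0.
  by move: (basis_free (vbasisP Ed)) => /freeP /(_ _ lam_basis).
case/eqP: lam0; apply/lfunP => q; rewrite zero_lfunE (subdual_expand q) linear_sum big1 // => i _.
by rewrite linearZ /= lam0_coord; exact: mulr0.
Qed.

Lemma resE_surj q : exists v, resE Ed v = q.
Proof.
have : q \in limg (linfun (resE Ed)) by rewrite limg_resE memvf.
by case/memv_imgP => v _ ->; exists v; rewrite lfunE.
Qed.

Lemma dim_annD_resE :
  \dim (fullv : {vspace V}) = (\dim (annD Ed) + \dim (fullv : {vspace Q}))%N.
Proof. by rewrite -(limg_ker_dim (linfun (resE Ed)) fullv) capfv lker_resE limg_resE. Qed.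

End Restriction.

(** * Lattices as O-spans *)

Section LocalField.
Variables (R : realType) (K : fieldType) (abs : K -> R).
Hypothesis hK : nonarch_local_field abs.

Lemma abs_eq0 x : (abs x == 0) = (x == 0).
Proof. by case: hK => h _; apply/eqP/eqP => /h. Qed.

Lemma abs0 : abs 0 = 0. Proof. by apply/eqP; rewrite abs_eq0. Qed.

Lemma absM x y : abs (x * y) = abs x * abs y. Proof. by case: hK => _ []. Qed.

Lemma abs_ultra x y : abs (x + y) <= Num.max (abs x) (abs y). Proof. by case: hK => _ []. Qed.

Lemma abs_ge0 x : 0 <= abs x.
Proof.
have [->|x0] := eqVneq x 0; first by rewrite abs0.
case: hK => _ [_ _ [p [/andP[p0 _] hp]] _ _].
by have [z ->] := hp x x0; apply/ltW/exprz_gt0.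
Qed.

Lemma abs1 : abs 1 = 1.
Proof.
have a1 : abs 1 != 0 by rewrite abs_eq0 oner_eq0.
by apply: (mulfI a1); rewrite -absM !mulr1.
Qed.

Lemma absN x : abs (- x) = abs x.
Proof.
have absN1 : abs (-1) = 1.
  apply/eqP; rewrite -(@eqrXn2 _ 2) ?abs_ge0 ?ler01 //.
  by rewrite expr2 -absM mulrNN mulr1 abs1 expr1n.
by rewrite -mulN1r absM absN1 mul1r.
Qed.

Lemma absV x : abs x^-1 = (abs x)^-1.
Proof.
have [->|x0] := eqVneq x 0; first by rewrite invr0 abs0 invr0.
have ax : abs x != 0 by rewrite abs_eq0.
by apply: (mulfI ax); rewrite -absM !divff // abs1.
Qed.

Lemma absX x n : abs (x ^+ n) = abs x ^+ n.
Proof. by elim: n => [|n IH]; rewrite ?expr0 ?abs1 // !exprS absM IH. Qed.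

Lemma absD_le1 x y : abs x <= 1 -> abs y <= 1 -> abs (x + y) <= 1.
Proof. by move=> hx hy; apply: le_trans (abs_ultra x y) _; rewrite ge_max hx hy. Qed.

Lemma absM_le1 x y : abs x <= 1 -> abs y <= 1 -> abs (x * y) <= 1.
Proof. by move=> hx hy; rewrite absM -[1]mulr1 ler_pM ?abs_ge0. Qed.

Section OSpan.
Variable V : vectType K.

Fixpoint ospan (s : seq V) : set V :=
  if s is x :: s' then [set v | exists c w, [/\ abs c <= 1, ospan s' w & v = c *: x + w]]
  else [set 0].

Lemma ospan0 s : ospan s 0.
Proof.
elim: s => [|x s IH] //=; exists 0, 0.
by rewrite abs0 // ler01 scale0r addr0.
Qed.

Lemma ospanD s u v : ospan s u -> ospan s v -> ospan s (u + v).
Proof.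
elim: s u v => [|x s IH] u v /=; first by move=> -> ->; rewrite addr0.
move=> [c [w [hc hw ->]]] [c' [w' [hc' hw' ->]]].
exists (c + c'), (w + w'); split; first exact: absD_le1.
  exact: IH.
by rewrite scalerDl addrACA.
Qed.

Lemma ospanZ s a v : abs a <= 1 -> ospan s v -> ospan s (a *: v).
Proof.
move=> ha; elim: s v => [|x s IH] v /=; first by move=> ->; rewrite scaler0.
move=> [c [w [hc hw ->]]]; exists (a * c), (a *: w); split; first exact: absM_le1.
  exact: IH.
by rewrite scalerDr scalerA.
Qed.

Lemma ospanN s v : ospan s v -> ospan s (- v).
Proof. by rewrite -scaleN1r; apply: ospanZ; rewrite absN // abs1. Qed.

Lemma ospanB s u v : ospan s u -> ospan s v -> ospan s (u - v).
Proof. by move=> hu hv; apply/ospanD/ospanN. Qed.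

Lemma mem_ospan s x : x \in s -> ospan s x.
Proof.
elim: s => [|y s IH] //=; rewrite inE => /orP[/eqP ->|hx].
  by exists 1, 0; rewrite abs1 // scale1r addr0; split => //; apply: ospan0.
by exists 0, x; rewrite abs0 // ler01 scale0r add0r; split => //; apply: IH.
Qed.

Lemma ospan_sub s t : (forall x, x \in s -> ospan t x) -> ospan s `<=` ospan t.
Proof.
elim: s => [|y s IH] h v /=; first by move=> ->; apply: ospan0.
move=> [c [w [hc hw ->]]]; apply: ospanD; first by apply: ospanZ => //; apply: h; apply: mem_head.
by apply: IH hw => x hx; apply: h; rewrite inE hx orbT.
Qed.

Lemma ospan_eq s t : (forall x, x \in s -> ospan t x) ->
  (forall x, x \in t -> ospan s x) -> ospan s = ospan t.
Proof. by move=> h1 h2; apply/seteqP; split; apply: ospan_sub. Qed.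

Lemma ospan_perm s t : perm_eq s t -> ospan s = ospan t.
Proof.
by move=> st; apply: ospan_eq => x hx; apply: mem_ospan; rewrite ?(perm_mem st) // -(perm_mem st).
Qed.

Lemma ospan_span s v : ospan s v -> v \in <<s>>%VS.
Proof.
elim: s v => [|x s IH] v /=; first by move=> ->; rewrite mem0v.
move=> [c [w [hc hw ->]]]; rewrite span_cons.
by apply: memv_add; [rewrite memvZ // memv_line | exact: IH].
Qed.

Lemma span_ospan s t : ospan s = ospan t -> <<s>>%VS = <<t>>%VS.
Proof.
move=> st; apply/eqP; rewrite eqEsubv; apply/andP; split; apply/span_subvP => x hx;
  apply: ospan_span; [rewrite -st | rewrite st]; exact: mem_ospan.
Qed.

Lemma ospan_cat s t v :
  ospan (s ++ t) v <-> exists a b, [/\ ospan s a, ospan t b & v = a + b].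
Proof.
elim: s v => [|x s IH] v /=.
  split; first by exists 0, v; rewrite add0r.
  by move=> [a [b [-> hb ->]]]; rewrite add0r.
split.
  move=> [c [w [hc /IH [a [b [ha hb ->]]] ->]]].
  by exists (c *: x + a), b; split => //; [exists c, a | rewrite addrA].
move=> [a [b [[c [w [hc hw ->]]] hb ->]]].
exists c, (w + b); split => //; last by rewrite addrA.
by apply/IH; exists w, b.
Qed.

Lemma latticeE (S : {vspace V}) L :
  lattice abs S L <-> exists2 b, basis_of S b & L = ospan b.
Proof.
suff ospanE b : [set v | exists a : 'I_(size b) -> K,
    (forall i, abs (a i) <= 1) /\ v = \sum_i a i *: b`_i] = ospan b.
  split; first by move=> [b [hb ->]]; exists b; rewrite ?ospanE.
  by move=> [b hb ->]; exists b; rewrite ospanE.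
elim: b => [|x s IH] /=.
  apply/seteqP; split => v /=; first by move=> [a [_ ->]]; rewrite big_ord0.
  by move=> ->; exists (fun _ => 0); split; [case | rewrite big_ord0].
apply/seteqP; split => v /=.
  move=> [a [ha ->]]; rewrite big_ord_recl /=.
  exists (a ord0), (\sum_(i < size s) a (lift ord0 i) *: s`_i); split => //.
  by rewrite -IH; exists (fun i => a (lift ord0 i)).
move=> [c [w [hc hw ->]]]; move: hw; rewrite -IH => -[a' [ha' ->]].
exists (fun i : 'I_(size s).+1 => if unlift ord0 i is Some j then a' j else c); split.
  by move=> i; case: (unlift ord0 i).
by rewrite big_ord_recl /= unlift_none; congr (_ + _); apply: eq_bigr => i _; rewrite liftK.
Qed.

End OSpan.

Arguments ospan {V}.

Lemma ospan_map (V W : vectType K) (f : {linear V -> W}) (s : seq V) :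
  f @` ospan s = ospan (map f s).
Proof.
elim: s => [|x s IH] /=.
  apply/seteqP; split => v /=; first by move=> [u -> <-]; rewrite linear0.
  by move=> ->; exists 0; rewrite ?linear0.
apply/seteqP; split => v /=.
  move=> [u [c [w [hc hw ->]]] <-]; exists c, (f w); split => //; last by rewrite linearP.
  by rewrite -IH; exists w.
move=> [c [w [hc hw ->]]]; move: hw; rewrite -IH => -[u hu <-].
by exists (c *: x + u); [exists c, u | rewrite linearP].
Qed.

(** * Commensurability of lattices *)

Section Commensurable.
Variable V : vectType K.
Implicit Types (b : seq V) (v : V).

Lemma ospan_zmod b : zmod_set (ospan b).
Proof. by split; [apply: ospan0 | move=> x y; apply: ospanB]. Qed.

Section Uniformizer.
Variable p : K.
Hypothesis hp : (0 < abs p < 1) /\ forall x, x != 0 -> exists z : int, abs x = abs p ^ z.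
Variable rs : seq K.
Hypothesis rs_le1 : forall y, y \in rs -> abs y <= 1.
Hypothesis rs_residues : forall x, abs x <= 1 -> exists y, y \in rs /\ abs (x - y) < 1.

Lemma abs_unif_gt0 : 0 < abs p. Proof. by case: hp => /andP[]. Qed.

Lemma unif_neq0 : p != 0.
Proof. by rewrite -abs_eq0 gt_eqF // abs_unif_gt0. Qed.

Lemma abs_unif_inv_gt1 : 1 < (abs p)^-1.
Proof. by case: hp => /andP[p0 p1] _; rewrite invf_gt1. Qed.

Lemma unifXz_le1 z : (abs p ^ z <= 1) = (0 <= z).
Proof.
rewrite -[z]opprK -exprz_inv -(expr0z (abs p)^-1) ler_eXz2l ?abs_unif_inv_gt1 //.
by rewrite oppr_le0 opprK.
Qed.

Lemma unifXz_lt1 z : (abs p ^ z < 1) = (0 < z).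
Proof.
rewrite -[z]opprK -exprz_inv -(expr0z (abs p)^-1) ltr_eXz2l ?abs_unif_inv_gt1 //.
by rewrite oppr_lt0 opprK.
Qed.

Lemma unifX_le1 n : abs (p ^+ n) <= 1.
Proof. by rewrite absX exprnP unifXz_le1. Qed.

Lemma abs_lt1_unif_dvd x : abs x < 1 -> abs (p^-1 * x) <= 1.
Proof.
have [->|x0] := eqVneq x 0; first by rewrite mulr0 abs0 ler01.
rewrite absM absV; have [z ->] := hp.2 x x0.
rewrite unifXz_lt1 -[(abs p)^-1]expr1z exprz_inv -expfzDr ?gt_eqF ?abs_unif_gt0 //.
by rewrite unifXz_le1 addrC subr_ge0.
Qed.

Lemma unifX_scale_le1 c : exists N, abs (p ^+ N * c) <= 1.
Proof.
have [->|c0] := eqVneq c 0; first by exists 0%N; rewrite mulr0 abs0 ler01.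
have [z hz] := hp.2 c c0.
exists `|z|%N; rewrite absM absX hz exprnP -expfzDr ?gt_eqF ?abs_unif_gt0 //.
by rewrite unifXz_le1 abszE -lerBlDr sub0r ler_normr lexx orbT.
Qed.

Definition residue_reps (b : seq V) : seq V :=
  foldr (fun x acc => [seq y *: x + z | y <- rs, z <- acc]) [:: 0] b.

Lemma covers_unif b : covers (ospan b) (ospan [seq p *: x | x <- b]) (residue_reps b).
Proof.
elim: b => [|x b [IH1 IH2]] /=.
  split; first by move=> x; rewrite inE => /eqP ->.
  by move=> x ->; exists 0; rewrite ?inE // subrr.
split.
  move=> v /allpairsP [[y z] /= [hy hz ->]].
  by exists y, z; split; [exact: rs_le1 | exact: IH1 |].
move=> v [c [w [hc hw ->]]].
have [y [hy hcy]] := rs_residues hc.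
have [z hz hwz] := IH2 w hw.
exists (y *: x + z); first by apply/allpairsP; exists (y, z).
exists (p^-1 * (c - y)), (w - z); split => //; first exact: abs_lt1_unif_dvd.
by rewrite scalerA mulrAC mulVf ?unif_neq0 // mul1r opprD addrACA -scalerBl.
Qed.

Lemma covers_unifX b N :
  exists s, covers (ospan b) (ospan [seq p ^+ N *: x | x <- b]) s.
Proof.
elim: N => [|N [s hs]].
  have -> : [seq p ^+ 0 *: x | x <- b] = b.
    by rewrite -[RHS]map_id; apply: eq_map => x; rewrite expr0 scale1r.
  exists [:: 0]; split => [x|x hx]; first by rewrite inE => /eqP ->; apply: ospan0.
  by exists 0; rewrite ?mem_head ?subr0.
exists [seq y + z | y <- s, z <- residue_reps [seq p ^+ N *: x | x <- b]].
apply: covers_trans hs _.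
- apply: ospan_sub => x /mapP [y hy ->]; apply: ospanZ => //; first exact: unifX_le1.
  exact: mem_ospan.
- by move=> x y; apply: ospanD.
- rewrite (_ : [seq p ^+ N.+1 *: x | x <- b] = [seq p *: x | x <- [seq p ^+ N *: x | x <- b]]).
    exact: covers_unif.
  by rewrite -map_comp; apply: eq_map => x /=; rewrite scalerA exprS.
Qed.

Lemma ospan_unifX_mono b v M N : (M <= N)%N ->
  ospan b (p ^+ M *: v) -> ospan b (p ^+ N *: v).
Proof.
by move=> /subnK <- hM; rewrite exprD -scalerA; apply: ospanZ => //; apply: unifX_le1.
Qed.

Lemma span_unifX_ospan b v : v \in <<b>>%VS -> exists N, ospan b (p ^+ N *: v).
Proof.
elim: b v => [|x b IH] v.
  by rewrite span_nil memv0 => /eqP ->; exists 0%N; rewrite scaler0; apply: ospan0.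
rewrite span_cons => /memv_addP [u /vlineP [c ->] [w /IH [N2 hw] ->]].
have [N1 hc] := unifX_scale_le1 c.
exists (N1 + N2)%N; rewrite scalerDr scalerA.
exists (p ^+ (N1 + N2) * c), (p ^+ (N1 + N2) *: w); split => //.
  by rewrite exprD mulrAC absM -[1]mulr1 ler_pM ?abs_ge0 ?unifX_le1.
by apply: ospan_unifX_mono hw; rewrite leq_addl.
Qed.

Lemma ospan_unifX_sub b b' : {subset b <= <<b'>>%VS} ->
  exists N, ospan [seq p ^+ N *: x | x <- b] `<=` ospan b'.
Proof.
elim: b => [|x b IH] hb; first by exists 0%N => v /= ->; apply: ospan0.
have [N1 hx] := span_unifX_ospan (hb x (mem_head _ _)).
have [N2 hN2] : exists N, ospan [seq p ^+ N *: x | x <- b] `<=` ospan b'.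
  by apply: IH => y hy; apply: hb; rewrite inE hy orbT.
exists (N1 + N2)%N; apply: ospan_sub => y; rewrite inE => /orP [/eqP ->|].
  by apply: ospan_unifX_mono hx; rewrite leq_addr.
move=> /mapP [z hz ->].
have := hN2 _ (mem_ospan (map_f (fun z => p ^+ N2 *: z) hz)).
by move/ospan_unifX_mono; apply; rewrite leq_addl.
Qed.

Lemma basis_unifX (S : {vspace V}) b N :
  basis_of S b -> basis_of S [seq p ^+ N *: x | x <- b].
Proof.
move=> hb; have pN : p ^+ N != 0 by rewrite expf_neq0 // unif_neq0.
have sb : <<[seq p ^+ N *: x | x <- b]>>%VS = <<b>>%VS.
  apply/eqP; rewrite eqEsubv; apply/andP; split; apply/span_subvP => x.
    by move=> /mapP [y hy ->]; rewrite memvZ // memv_span.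
  by move=> hx; rewrite -[x](scalerK pN) memvZ // memv_span // map_f.
by rewrite /basis_of sb (span_basis hb) eqxx /= /free sb size_map; case/andP: hb.
Qed.

End Uniformizer.

Lemma lattice_zmod (S : {vspace V}) L : lattice abs S L -> zmod_set L.
Proof. by move=> /latticeE [b _ ->]; apply: ospan_zmod. Qed.

Lemma lattice_lindex (S : {vspace V}) L L' :
  lattice abs S L -> lattice abs S L' -> exists n, lindex L L' n.
Proof.
case: hK => _ [_ _ [p hp] [rs [rs_le1 rs_res]] _].
move=> /latticeE [b hb ->] /latticeE [b' hb' ->].
have [N hN] : exists N, ospan [seq p ^+ N *: x | x <- b] `<=` ospan b'.
  by apply: (ospan_unifX_sub hp) => x hx; rewrite (span_basis hb') (basis_mem hb hx).
have [s hs] := covers_unifX hp rs_le1 rs_res b N.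
exact: covers_lindex (ospan_zmod b') (covers_sub hN hs).
Qed.

Lemma lattice_common_sub (S : {vspace V}) L1 L2 : lattice abs S L1 -> lattice abs S L2 ->
  exists L3, [/\ lattice abs S L3, L3 `<=` L1 & L3 `<=` L2].
Proof.
case: hK => _ [_ _ [p hp] _ _].
move=> /latticeE [b hb ->] /latticeE [b' hb' ->].
have [N hN] : exists N, ospan [seq p ^+ N *: x | x <- b] `<=` ospan b'.
  by apply: (ospan_unifX_sub hp) => x hx; rewrite (span_basis hb') (basis_mem hb hx).
exists (ospan [seq p ^+ N *: x | x <- b]); split => //.
  by apply/latticeE; exists [seq p ^+ N *: x | x <- b]; rewrite ?basis_unifX.
apply: ospan_sub => x /mapP [y hy ->]; apply: ospanZ; first exact: (unifX_le1 hp).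
exact: mem_ospan.
Qed.

End Commensurable.

(** * Lattices adapted to a subspace *)

Section AdaptedBasis.
Variable V : vectType K.
Implicit Types (b s t : seq V) (g : 'Hom(V, K^o)).

Lemma free_ospan s t : ospan s = ospan t -> size s = size t -> free t -> free s.
Proof. by move=> st hs; rewrite /free (span_ospan st) hs. Qed.

(* Eliminating g from an O-basis: pivot on an entry where |g| is maximal, so that all
   the multipliers g x / g h have absolute value <= 1. *)
Lemma ospan_pivot g b : (exists2 x, x \in b & g x != 0) ->
  exists h rest, [/\ ospan (h :: rest) = ospan b, size rest = (size b).-1, g h != 0 &
     forall r, r \in rest -> g r = 0].
Proof.
move=> [x0 hx0 gx0].
have [h hb hm] : exists2 h, h \in b & forall x, x \in b -> abs (g x) <= abs (g h).
  by apply: exists_seq_argmax; case: (b) hx0.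
have gh : g h != 0.
  apply/negP => /eqP gh0; have := hm x0 hx0; rewrite gh0 abs0.
  by rewrite le_eqVlt abs_eq0 (negPf gx0) /= ltNge abs_ge0.
pose c x := (g x : K) / g h.
have hc x : x \in b -> abs (c x) <= 1.
  move=> hx; rewrite /c absM absV ler_pdivrMr ?mul1r ?hm //.
  by rewrite lt0r abs_eq0 gh abs_ge0.
exists h, [seq x - c x *: h | x <- rem h b]; split.
- rewrite (ospan_perm (perm_to_rem hb)); apply: ospan_eq => y.
    rewrite inE => /orP [/eqP ->|/mapP [x hx ->]]; first exact/mem_ospan/mem_head.
    apply: ospanB; first by apply: mem_ospan; rewrite inE hx orbT.
    by apply: ospanZ; [exact: hc (mem_rem hx) | exact/mem_ospan/mem_head].
  rewrite inE => /orP [/eqP ->|hy]; first exact/mem_ospan/mem_head.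
  rewrite -[y](subrK (c y *: h)); apply: ospanD.
    by apply: mem_ospan; rewrite inE; apply/orP; right; apply/mapP; exists y.
  by apply: ospanZ; [exact: hc (mem_rem hy) | exact/mem_ospan/mem_head].
- by rewrite size_map size_rem.
- exact: gh.
- move=> r /mapP [x hx ->]; rewrite linearB linearZ /= /c.
  by rewrite -[X in _ - X = _]/(_ * _) mulfVK // subrr.
Qed.

Lemma ospan_adapted (gs : seq 'Hom(V, K^o)) b :
  exists P Rr, [/\ ospan (P ++ Rr) = ospan b, size (P ++ Rr) = size b,
    (forall r g, r \in Rr -> g \in gs -> g r = 0) &
    (forall x, x \in <<P>>%VS -> (forall g, g \in gs -> g x = 0) -> x = 0)].
Proof.
elim: gs b => [|g gs IH] b.
  by exists [::], b; split => // x; rewrite span_nil memv0 => /eqP ->.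
have [[x0 hx0 gx0]|nz] := pselect (exists2 x, x \in b & g x != 0); last first.
  have [P [Rr [h1 h2 h3 h4]]] := IH b.
  have gb v : v \in <<b>>%VS -> g v = 0.
    by apply: lfun_span_eq0 => x hx; apply: contra_notP nz => /eqP gx; exists x.
  exists P, Rr; split => //.
    move=> r g'; rewrite inE => hr /orP [/eqP ->|]; last exact: h3.
    by apply/gb/ospan_span; rewrite -h1; apply: mem_ospan; rewrite mem_cat hr orbT.
  by move=> x hx hg; apply: h4 => // g' hg'; apply: hg; rewrite inE hg' orbT.
have [h [rest [e1 e2 e3 e4]]] := ospan_pivot (ex_intro2 _ _ x0 hx0 gx0).
have [P [Rr [h1 h2 h3 h4]]] := IH rest.
have grest v : v \in <<rest>>%VS -> g v = 0 by apply: lfun_span_eq0.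
exists (h :: P), Rr; split.
- by rewrite cat_cons -e1 /= h1.
- by rewrite /= h2 e2; case: (b) hx0.
- move=> r g'; rewrite inE => hr /orP [/eqP ->|]; last exact: h3.
  by apply/grest/ospan_span; rewrite -h1; apply: mem_ospan; rewrite mem_cat hr orbT.
- move=> x; rewrite span_cons => /memv_addP [u /vlineP [c ->] [w hw ->]] hg.
  have gw : g w = 0.
    apply: grest; rewrite -(span_ospan h1) span_cat.
    exact: (subvP (addvSl _ _)).
  have := hg g (mem_head _ _); rewrite linearD linearZ /= gw addr0 => /eqP.
  rewrite mulf_eq0 (negPf e3) orbF => /eqP c0.
  rewrite c0 scale0r add0r in hg *; apply: h4 => // g' hg'; apply: hg; by rewrite inE hg' orbT.
Qed.

End AdaptedBasis.

Section LatticeSplit.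
Context {V : vectType K} {Ed : {vspace dual V}}.
Local Notation Q := (subdual Ed).
Local Notation pi := (resE Ed).
Local Notation E0 := (annD Ed).
Local Notation E0s := [set v : V | v \in annD Ed].

Lemma resE_annD v : v \in E0 -> pi v = 0.
Proof. by rewrite annD_resE => /eqP. Qed.

Lemma ospan_split (t : seq Q) (u r : seq V) :
  basis_of fullv t -> map pi u = t -> basis_of E0 r ->
  [/\ basis_of fullv (u ++ r), pi @` ospan (u ++ r) = ospan t &
      ospan (u ++ r) `&` E0s = ospan r].
Proof.
move=> ht hu hr.
have su : size u = \dim (fullv : {vspace Q}) by rewrite -(size_basis_of ht) -hu size_map.
have img_u : (linfun pi @: <<u>> = fullv)%VS.
  by rewrite limg_span (eq_map (lfunE pi)) hu (span_basis ht).
have u_cap_E0 : (<<u>> :&: E0 = 0)%VS.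
  apply/eqP; rewrite -dimv_eq0 -lker_resE; have := limg_ker_dim (linfun pi) <<u>>%VS.
  rewrite img_u -su => h; have := dim_span u; rewrite -h.
  by rewrite -{2}[size u]add0n leq_add2r leqn0.
have rE0 x : x \in r -> x \in E0 by apply: basis_mem.
split.
- rewrite basisEdim size_cat su (size_basis_of hr) addnC -dim_annD_resE leqnn andbT.
  apply/subvP => v _; have : linfun pi v \in (linfun pi @: <<u>>)%VS by rewrite img_u memvf.
  case/memv_imgP => x hx hvx.
  have : v - x \in E0 by rewrite -lker_resE memv_ker linearB /= hvx subrr.
  rewrite -(span_basis hr) => hvr.
  by rewrite -[v](subrK x) span_cat addrC; apply: memv_add.
- rewrite ospan_map map_cat hu; apply: ospan_eq => x.
    rewrite mem_cat => /orP [hx|/mapP [y hy ->]]; first exact: mem_ospan.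
    by have /= -> := resE_annD (rE0 _ hy); apply: ospan0.
  by move=> hx; apply: mem_ospan; rewrite mem_cat hx.
- apply/seteqP; split => v /=.
    move=> [/ospan_cat [a [b [ha hb ->]]] hv].
    have hb0 : b \in E0 by rewrite -(span_basis hr); apply: ospan_span.
    suff -> : a = 0 by rewrite add0r.
    apply/eqP; rewrite -memv0 -u_cap_E0 memv_cap (ospan_span ha) /=.
    by rewrite -[a](addrK b) memvB.
  move=> hv; split; last by rewrite -(span_basis hr); apply: ospan_span.
  by apply/ospan_cat; exists 0, v; rewrite add0r; split => //; apply: ospan0.
Qed.

Lemma lattice_adapted (L : set V) : lattice abs fullv L ->
  exists u r, [/\ basis_of fullv (map pi u), basis_of E0 r & L = ospan (u ++ r)].
Proof.
move=> /latticeE [b hb ->].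
have [P [Rr [h1 h2 h3 h4]]] := ospan_adapted (vbasis Ed) b.
have fr : free (P ++ Rr) by apply: (free_ospan h1 h2); apply: basis_free hb.
have sp : <<P ++ Rr>>%VS = fullv by rewrite (span_ospan h1) (span_basis hb).
have RE0 x : x \in Rr -> x \in E0 by move=> hx; apply/mem_annD => g; apply: h3.
have sRE : (<<Rr>> <= E0)%VS by apply/span_subvP.
have P_E0 x : x \in <<P>>%VS -> x \in E0 -> x = 0 by move=> hx /mem_annD; apply: h4.
have hRr : basis_of E0 Rr.
  rewrite basisEfree (catr_free fr) sRE /=; move: (catr_free fr) => /eqnP <-.
  apply: dimvS; apply/subvP => v hv; have : v \in <<P ++ Rr>>%VS by rewrite sp memvf.
  rewrite span_cat => /memv_addP [x hx [y hy hxy]]; subst v.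
  have hyE : y \in E0 by apply: (subvP sRE).
  by rewrite (P_E0 x) ?add0r // -[x](addrK y) memvB.
exists P, Rr; split => //; rewrite basisEdim size_map.
have -> : size P = \dim (fullv : {vspace Q}).
  have := dim_annD_resE Ed; rewrite -(size_basis_of hRr) -sp.
  by move: fr => /eqnP ->; rewrite size_cat addnC => /eqP; rewrite eqn_add2l => /eqP.
rewrite leqnn andbT; apply/subvP => q _; have [v <-] := resE_surj q.
have : v \in <<P ++ Rr>>%VS by rewrite sp memvf.
rewrite span_cat => /memv_addP [x hx [y hy ->]].
rewrite raddfD /= (resE_annD (subvP sRE y hy)) addr0.
have : linfun pi x \in (linfun pi @: <<P>>)%VS by apply: memv_img.
by rewrite lfunE limg_span (eq_map (lfunE pi)).
Qed.

Lemma lattice_split (L : set V) : lattice abs fullv L ->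
  exists t r, [/\ basis_of fullv t, pi @` L = ospan t, basis_of E0 r & L `&` E0s = ospan r].
Proof.
move=> /lattice_adapted [u [r [hu hr ->]]].
by have [_ e1 e2] := ospan_split hu erefl hr; exists (map pi u), r.
Qed.

Lemma lattice_resE (L : set V) : lattice abs fullv L -> lattice abs fullv (pi @` L).
Proof. by move=> /lattice_split [t [r [ht -> _ _]]]; apply/latticeE; exists t. Qed.

Lemma lattice_annD (L : set V) : lattice abs fullv L -> lattice abs E0 (L `&` E0s).
Proof. by move=> /lattice_split [t [r [_ _ hr ->]]]; apply/latticeE; exists r. Qed.

Lemma lattice_lift (t : seq Q) (A : set V) (r : seq V) :
  basis_of fullv t -> basis_of E0 r -> (forall q, q \in t -> exists2 w, A w & pi w = q) ->
  exists u, [/\ forall w, w \in u -> A w, lattice abs fullv (ospan (u ++ r)),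
     pi @` ospan (u ++ r) = ospan t & ospan (u ++ r) `&` E0s = ospan r].
Proof.
move=> ht hr /map_lift [u hu uA].
have [e1 e2 e3] := ospan_split ht hu hr.
by exists u; split => //; apply/latticeE; exists (u ++ r).
Qed.

End LatticeSplit.

(** * Splitting Haar measures *)

Lemma meas_lattice_neq0 (V : vectType K) (S : {vspace V}) (mu : set V -> R[i]) :
  meas abs S mu -> mu <> mzero V -> forall L, lattice abs S L -> mu L != 0.
Proof.
move=> [mu_out mu_index] mu0 L hL.
have [L0 muL0] : exists L0, mu L0 != 0.
  apply: contra_notP mu0 => h; apply: funext => L0.
  by apply/eqP; apply: contra_notT h => ?; exists L0.
have hL0 : lattice abs S L0 by apply: contrapT => /mu_out h; rewrite h eqxx in muL0.
have [L3 [hL3 L3L L3L0]] := lattice_common_sub hL hL0.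
have [n0 hn0] := lattice_lindex hL0 hL3.
have [n hn] := lattice_lindex hL hL3.
have muL3 : mu L3 != 0.
  by move: muL0; rewrite (mu_index _ _ _ hL0 hL3 L3L0 hn0) mulf_eq0 negb_or => /andP[].
rewrite (mu_index _ _ _ hL hL3 L3L hn) mulf_neq0 // pnatr_eq0 -lt0n.
exact: lindex_gt0 (lattice_zmod hL).1 hn.
Qed.

Section Fubini.
Variables (V : vectType K) (Ed : {vspace dual V}) (rho sigma : set V -> R[i]).
Hypotheses (hrho : meas abs fullv rho) (hsigma : meas abs (annD Ed) sigma).
Hypothesis sigma_neq0 : sigma <> mzero V.
Local Notation Q := (subdual Ed).
Local Notation pi := (resE Ed).
Local Notation E0s := [set v : V | v \in annD Ed].

Definition fiber_ratio (L : set V) := rho L / sigma (L `&` E0s).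

Lemma sigma_annD_neq0 L : lattice abs fullv L -> sigma (L `&` E0s) != 0.
Proof. by move=> hL; apply: (meas_lattice_neq0 hsigma sigma_neq0); apply: lattice_annD. Qed.

Lemma fiber_ratio_index L L' n : lattice abs fullv L -> lattice abs fullv L' ->
  L' `<=` L -> lindex (pi @` L) (pi @` L') n -> fiber_ratio L = n%:R * fiber_ratio L'.
Proof.
move=> hL hL' L'L hn.
have [m hm] := lattice_lindex (lattice_annD (Ed := Ed) hL) (lattice_annD (Ed := Ed) hL').
have resE_eq0 v : pi v = 0 <-> E0s v by rewrite /= annD_resE; split => [->|/eqP].
have hmn := lindex_exact resE_eq0 (lattice_zmod hL) (lattice_zmod hL') L'L hm hn.
have L'L_E0 : L' `&` E0s `<=` L `&` E0s by move=> x [h1 h2]; split => //; apply: L'L.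
rewrite /fiber_ratio (hrho.2 _ _ _ hL hL' L'L hmn).
rewrite (hsigma.2 _ _ _ (lattice_annD (Ed := Ed) hL) (lattice_annD (Ed := Ed) hL') L'L_E0 hm).
have m0 : m%:R != 0 :> R[i].
  rewrite pnatr_eq0 -lt0n; apply: lindex_gt0 hm.
  exact: (lattice_zmod (lattice_annD (Ed := Ed) hL)).1.
have s0 := sigma_annD_neq0 hL'.
by rewrite natrM invfM; field; apply/andP.
Qed.

Lemma fiber_ratio_resE L1 L2 : lattice abs fullv L1 -> lattice abs fullv L2 ->
  pi @` L1 = pi @` L2 -> fiber_ratio L1 = fiber_ratio L2.
Proof.
move=> hL1 hL2 e12.
have [L3 [hL3 L31 L32]] := lattice_common_sub hL1 hL2.
have [n hn] := lattice_lindex (lattice_resE (Ed := Ed) hL1) (lattice_resE (Ed := Ed) hL3).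
have hn2 : lindex (pi @` L2) (pi @` L3) n by rewrite -e12.
by rewrite (fiber_ratio_index hL1 hL3 L31 hn) (fiber_ratio_index hL2 hL3 L32 hn2).
Qed.

Definition lattice_above (T : set Q) : set V :=
  epsilon (inhabits set0) (fun L => lattice abs fullv L /\ pi @` L = T).

Lemma lattice_aboveP T : lattice abs fullv T ->
  lattice abs fullv (lattice_above T) /\ pi @` lattice_above T = T.
Proof.
move=> /latticeE [t ht ->].
apply: (epsilon_spec (inhabits set0) (fun L => lattice abs fullv L /\ pi @` L = ospan t)).
have lift q : q \in t -> exists2 w, setT w & pi w = q.
  by move=> _; have [v <-] := resE_surj q; exists v.
have [u [_ hu e _]] := lattice_lift ht (vbasisP (annD Ed)) lift.
by exists (ospan (u ++ vbasis (annD Ed))).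
Qed.

Definition quotient_meas (T : set Q) : R[i] :=
  if pselect (lattice abs fullv T) is left _ then fiber_ratio (lattice_above T) else 0.

Lemma quotient_meas_resE L : lattice abs fullv L -> quotient_meas (pi @` L) = fiber_ratio L.
Proof.
move=> hL; rewrite /quotient_meas; case: pselect => [hT|]; last by move/(_ (lattice_resE hL)).
by have [hL' e] := lattice_aboveP hT; apply: fiber_ratio_resE.
Qed.

Lemma meas_quotient : meas abs fullv quotient_meas.
Proof.
split => [T hT|T T' n hT hT' T'T hn]; first by rewrite /quotient_meas; case: pselect.
have [hL eL] := lattice_aboveP hT; set L := lattice_above T in hL eL.
have [_ [r [_ _ hr eLr]]] := lattice_split (Ed := Ed) hL.
move: (hT') => /latticeE [t' ht' eT'].
have [u [uL hL' eL' eL'r]] : exists u, [/\ forall w, w \in u -> L w,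
    lattice abs fullv (ospan (u ++ r)), pi @` ospan (u ++ r) = ospan t' &
    ospan (u ++ r) `&` E0s = ospan r].
  apply: lattice_lift => // q hq.
  have : (pi @` L) q by rewrite eL; apply/T'T; rewrite eT'; exact: mem_ospan.
  by case=> w hw <-; exists w.
have L'L : ospan (u ++ r) `<=` L.
  move: (hL) => /latticeE [b hb eb]; rewrite eb; apply: ospan_sub => x.
  rewrite mem_cat => /orP [/uL|hx]; first by rewrite -eb.
  have : ospan r x by apply: mem_ospan.
  by rewrite -eLr eb => -[].
rewrite -eL eT' -eL' !quotient_meas_resE //; apply: fiber_ratio_index => //.
by rewrite eL eL' -eT'.
Qed.

Lemma meas_split L : lattice abs fullv L ->
  rho L = sigma (L `&` E0s) * quotient_meas (pi @` L).
Proof.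
by move=> hL; rewrite quotient_meas_resE // /fiber_ratio mulrC divfK // sigma_annD_neq0.
Qed.

End Fubini.

Lemma aE_mzero (V : vectType K) (Ed : {vspace dual V}) (rho : set V -> R[i]) :
  meas abs fullv rho -> aE abs Ed (mzero (dual V)) rho = mzero V.
Proof.
move=> hrho; rewrite /aE /choose_fun.
set P := fun s : set V -> R[i] => _.
have P0 : P (mzero V).
  split; first by split => // L L' n _ _ _ _; rewrite /mzero mulr0.
  by move=> sigma tau L _ _ _ _ _; apply: funext => S; rewrite /cscale /mzero !mul0r.
have [s_meas s_eq] := epsilon_spec (inhabits (fun _ : set V => 0 : R[i])) P (ex_intro _ _ P0).
set s := epsilon _ _ in s_meas s_eq *.
apply: contrapT => s0.
(* a nonzero s could serve as sigma in its own defining property, forcing s = 0 *)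
apply: (s0); rewrite (s_eq s (quotient_meas rho s) (ospan (vbasis Ed))) //.
- by apply: funext => S; rewrite /cscale /mzero !mul0r.
- exact: meas_quotient.
- by apply/latticeE; exists (vbasis Ed); first exact: vbasisP.
- by move=> L hL; apply: meas_split.
Qed.

End LocalField.

Lemma annV_lker_dualmap_neq0 (K : fieldType) (X Y : vectType K) (F : 'Hom(X, Y))
    (E : {vspace Y}) :
  (E + limg F)%VS != fullv -> (annV E :&: lker (dualmap F))%VS != 0%VS.
Proof.
move=> /exists_annihilator [g g0 hg]; apply: contraNneq g0 => h0.
have comp_lin (A : vectType K) (f : 'Hom(A, Y)) : linear (fun g : dual Y => (g \o f)%VF).
  by move=> a f1 f2; rewrite comp_lfunDl comp_lfunZl.
rewrite -memv0 -h0 memv_cap memv_ker /dualmap (linfunE_lin (comp_lin _ F)).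
rewrite /annV memv_ker (linfunE_lin (comp_lin _ _)); apply/andP; split; apply/eqP/lfunP => y;
  rewrite comp_lfunE zero_lfunE; apply: hg.
  by rewrite (subvP (addvSl E _)) ?memv_proj.
by rewrite (subvP (addvSr E _)) ?memv_img ?memvf.
Qed.

Theorem proposition11p2 (R : realType) (K : fieldType) (abs : K -> R)
  (hK : nonarch_local_field abs)
  (X Y : vectType K) (F : 'Hom(X, Y)) (hF : lker F = 0%VS)
  (k : nat) (xi : {vspace X} -> (set X -> R[i]) -> set X -> R[i])
  (hxi : tsection abs k xi)
  (E : {vspace Y})
  (hE : \dim E = (k + (\dim (fullv : {vspace Y}) - \dim (fullv : {vspace X})))%N)
  (hEX : (E + limg F)%VS != fullv) :
  forall rho : set Y -> R[i], meas abs (fullv : {vspace Y}) rho ->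
    pushforward abs F k xi E rho = mzero Y.
Proof.
move=> rho hrho; rewrite /pushforward /fourier; case: ifP => _ //.
rewrite /pullback ifF; first exact: aE_mzero.
apply/negbTE; rewrite -(limg_ker_dim (dualmap F) (annV E)) -{1}[\dim (_ @: _)%VS]add0n.
by rewrite eqn_add2r eq_sym dimv_eq0 annV_lker_dualmap_neq0.
Qed.
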